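(* Let $L$ be a loss function, $n_1<n$, $n_2=n-n_1$, and let $S_j$ be uniformly distributed on the $n_1$-subsets of $N=\{1,\dots,n\}$. Suppose that the (asymptotic) values of $\mathbb{E}[L(\hat y_{S_j,i},y_i)\mid S_j,i]$ and of $\mathbb{E}[L(\hat y_{S_j,i},y_i)L(\hat y_{S_j,i'},y_{i'})\mid S_j,i,i']$ for $i,i'\in S_j^c$ do not depend on the particular realization of $S_j$; call them $\mathsf{e}_i$ and $\mathsf{e}_{i,i'}$ respectively (so $\mathsf{e}_{i,i}=\mathbb{E}[L^2(\hat y_{S_j,i},y_i)\mid S_j,i]$). Then the (asymptotic) values of $\mathbb{E}(\hat\mu_j)$ and $\operatorname{Var}(\hat\mu_j)$ are $$\mathbb{E}(\hat\mu_j)=\frac1n\sum_{i=1}^n\mathsf{e}_i,$$ $$\operatorname{Var}(\hat\mu_j)=\frac{1}{n^2n_2}\Big\{\sum_{i=1}^n\big(n\,\mathsf{e}_{i,i}-n_2\,\mathsf{e}_i^2\big)+\frac{2}{n-1}\sum_{1\le i<i'\le n}\big[n(n_2-1)\mathsf{e}_{i,i'}-(n-1)n_2\,\mathsf{e}_i\mathsf{e}_{i'}\big]\Big\}.$$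
   Context: Data $(y_i,\mathbf{x}_i)$, $i=1,\dots,n$. For a training index set $S_j$, $\hat y_{S_j,i}$ is the prediction for observation $i$ of the rule fitted on $\{(y_k,\mathbf{x}_k):k\in S_j\}$, and the average test set error is $\hat\mu_j=\frac{1}{n_2}\sum_{i\in S_j^c}L(\hat y_{S_j,i},y_i)$. *)

From HB Require Import structures.
From mathcomp Require Import all_boot all_order all_algebra.
From mathcomp Require Import all_classical all_reals all_analysis.
Set Implicit Arguments. Unset Strict Implicit. Unset Printing Implicit Defensive.
Import Order.TTheory GRing.Theory Num.Theory.
Local Open Scope ring_scope.
Local Open Scope classical_set_scope.

Definition condE (R : realType) (d : measure_display) (T : measurableType d)
  (P : probability T R) (X : T -> R) (A : set T) : R :=
  fine (\int[P]_(w in A) (X w)%:E) / fine (P A).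

From HB Require Import structures.
From mathcomp Require Import all_boot all_order all_algebra.
From mathcomp Require Import all_classical all_reals all_analysis.
From mathcomp Require Import measurable_realfun ring lra zify.
Import Order.TTheory GRing.Theory Num.Theory numFieldNormedType.Exports.
Local Open Scope ring_scope.
Local Open Scope classical_set_scope.

(* Split the sample space along the events {S = s}.  For #|s| = n1 the event
   has probability 1 / 'C(n, n1) and, by the hypotheses on conditional
   expectations, the integral over it of L_i (resp. L_i L_j) is e_i (resp.
   e_ij) times that probability; for other s the event is null.  Summing over
   s, E[muhat] and E[muhat^2] become sums over the n1-subsets avoiding i (there
   are 'C(n - 1, n1) of them) or avoiding both i and j ('C(n - 2, n1)).  The
   identities n 'C(n - 1, n1) = n2 'C(n, n1) and
   (n - 1) 'C(n - 2, n1) = (n2 - 1) 'C(n - 1, n1), together with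
   Var = E[muhat^2] - E[muhat]^2, give the two formulas. *)

Section measure_integrals.
Context {d : measure_display} {T : measurableType d} {R : realType}.
Context {mu : {measure set T -> \bar R}}.

Lemma integrable_sumR {I : Type} (r : seq I) (Pr : pred I) (F : I -> T -> R) :
  (forall i, mu.-integrable setT (EFin \o F i)) ->
  mu.-integrable setT (EFin \o (fun w => \sum_(i <- r | Pr i) F i w)).
Proof.
move=> iF; have := @integrable_sum _ _ _ mu _ measurableT _ r Pr _ (fun i _ => iF i).
by apply: eq_integrable => // w _; rewrite /= sumEFin.
Qed.

Lemma integrableZlR (c : R) (f : T -> R) : mu.-integrable setT (EFin \o f) ->
  mu.-integrable setT (EFin \o (fun w => c * f w)).
Proof. exact: integrableZl. Qed.

Lemma integrableM_of_sqr (f g : T -> R) :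
  measurable_fun setT f -> measurable_fun setT g ->
  mu.-integrable setT (EFin \o (fun w => f w ^+ 2)) ->
  mu.-integrable setT (EFin \o (fun w => g w ^+ 2)) ->
  mu.-integrable setT (EFin \o (fun w => f w * g w)).
Proof.
move=> mf mg if2 ig2; apply: (le_integrable measurableT _ _ (integrableD _ if2 ig2)) => //.
  by apply/measurable_EFinP; exact: measurable_funM.
move=> w _ /=; rewrite lee_fin normrM [X in _ <= X]ger0_norm ?addr_ge0 ?sqr_ge0 //.
rewrite -[f w ^+ 2]real_normK ?num_real // -[g w ^+ 2]real_normK ?num_real //.
have := sqr_ge0 (`|f w| - `|g w|); nra.
Qed.

Lemma Rintegral_sum (I : Type) (r : seq I) (Pr : pred I) (D : set T) (F : I -> T -> R) :
  measurable D -> (forall i, mu.-integrable D (EFin \o F i)) ->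
  \int[mu]_(w in D) (\sum_(i <- r | Pr i) F i w) =
  \sum_(i <- r | Pr i) \int[mu]_(w in D) F i w.
Proof.
move=> mD iF; rewrite /Rintegral.
under eq_integral do rewrite -sumEFin.
rewrite integral_sum // -sum_fine // => i _.
exact: (integrable_fin_num mD (iF i)).
Qed.

Section partition.
Context {K : finType}.
Variables (S : T -> K) (F : K -> T -> R).
Hypothesis mS : forall k, measurable [set w | S w = k].
Hypothesis iF : forall k, mu.-integrable setT (EFin \o F k).

Let sum_patch_partition w : F (S w) w = \sum_k (F k \_ [set w | S w = k]) w.
Proof.
rewrite (bigD1 (S w)) //= patchE mem_set // big1 ?addr0 // => k kSw.
by rewrite patchE memNset // => /= Swk; rewrite Swk eqxx in kSw.
Qed.

Lemma integrable_patch_partition k :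
  mu.-integrable setT (EFin \o F k \_ [set w | S w = k]).
Proof.
rewrite -restrict_EFin; apply/(integrable_mkcond _ (mS k)).
exact: (integrableS measurableT (mS k) (subsetT _) (iF k)).
Qed.

Lemma integrable_partition : mu.-integrable setT (EFin \o (fun w => F (S w) w)).
Proof.
have := integrable_sumR (index_enum K) xpredT _ integrable_patch_partition.
by apply: eq_integrable => // w _; rewrite /= -sum_patch_partition.
Qed.

Lemma Rintegral_partition :
  \int[mu]_w F (S w) w = \sum_k \int[mu]_(w in [set w | S w = k]) F k w.
Proof.
under eq_Rintegral do rewrite sum_patch_partition.
rewrite Rintegral_sum //; last exact: integrable_patch_partition.
by apply: eq_bigr => k _; rewrite [RHS]Rintegral_mkcond.
Qed.

End partition.
End measure_integrals.

Lemma integrable_of_sqr d (T : measurableType d) (R : realType)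
    (mu : {finite_measure set T -> \bar R}) (f : T -> R) :
  measurable_fun setT f ->
  mu.-integrable setT (EFin \o (fun w => f w ^+ 2)) -> mu.-integrable setT (EFin \o f).
Proof.
move=> mf if2.
have i1f2 := integrableD measurableT (finite_measure_integrable_cst mu 1 measurableT) if2.
apply: (le_integrable measurableT _ _ i1f2); first exact/measurable_EFinP.
move=> w _ /=; rewrite lee_fin [X in _ <= X]ger0_norm ?addr_ge0 ?sqr_ge0 //.
have := sqr_ge0 (`|f w| - 1); rewrite -[f w ^+ 2]real_normK ?num_real //.
have := normr_ge0 (f w); nra.
Qed.

Lemma integral_EFin_Rintegral d (T : measurableType d) (R : realType)
    (mu : {measure set T -> \bar R}) (D : set T) (f : T -> R) :
  measurable D -> mu.-integrable D (EFin \o f) ->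
  (\int[mu]_(w in D) (f w)%:E = (\int[mu]_(w in D) f w)%:E)%E.
Proof. by move=> mD iF; rewrite /Rintegral fineK // (integrable_fin_num mD iF). Qed.

Section probability_integrals.
Context {d : measure_display} {T : measurableType d} {R : realType}.
Variable P : probability T R.

(* Also when [P A = 0]: then both sides vanish, [condE] dividing by [0]. *)
Lemma Rintegral_condE (A : set T) (f : T -> R) :
  measurable A -> P.-integrable setT (EFin \o f) ->
  \int[P]_(w in A) f w = condE P f A * fine (P A).
Proof.
move=> mA iF; rewrite /condE.
have [PA0|PA0] := eqVneq (fine (P A)) 0; last by rewrite divfK.
have nPA : P A = 0%E by rewrite -[P A]fineK ?fin_num_measure // PA0.
rewrite PA0 mulr0 /Rintegral null_set_integral //.
by apply: (measurable_funS measurableT (subsetT _)); case/integrableP: iF.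
Qed.

Section centered_square.
Variables (f : T -> R) (c : R).
Hypotheses (iF : P.-integrable setT (EFin \o f))
  (iF2 : P.-integrable setT (EFin \o (fun w => f w ^+ 2))).

Let sqr_centered_expand w : (f w - c) ^+ 2 = f w ^+ 2 + (- (2 * c) * f w + c ^+ 2).
Proof. by ring. Qed.

Let iFc : P.-integrable setT (EFin \o (fun w => - (2 * c) * f w + c ^+ 2)).
Proof.
exact: (integrableD measurableT (integrableZlR (- (2 * c)) _ iF)
  (finite_measure_integrable_cst P (c ^+ 2) measurableT)).
Qed.

Lemma integrable_centered_sqr : P.-integrable setT (EFin \o (fun w => (f w - c) ^+ 2)).
Proof.
apply: (eq_integrable measurableT _ _ _ (integrableD measurableT iF2 iFc)) => w _.
by rewrite /= sqr_centered_expand.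
Qed.

Lemma Rintegral_centered_sqr :
  \int[P]_w (f w - c) ^+ 2 = \int[P]_w f w ^+ 2 - 2 * c * \int[P]_w f w + c ^+ 2.
Proof.
under eq_Rintegral do rewrite sqr_centered_expand.
rewrite RintegralD // RintegralD //; last exact: (finite_measure_integrable_cst P _ measurableT).
  rewrite RintegralZl // Rintegral_cst // (_ : fine (P _) = 1); last by rewrite probability_setT.
  by ring.
exact: integrableZlR.
Qed.

End centered_square.

End probability_integrals.

Local Close Scope classical_set_scope.

Section sums_over_draws.
Variables (V : nmodType) (T : finType) (k : nat).

Lemma card_draws_subsetC (A : {set T}) :
  #|[set s : {set T} | #|s| == k & s \subset ~: A]| = 'C(#|T| - #|A|, k).
Proof.
have cardCA : #|~: A| = (#|T| - #|A|)%N by rewrite -(cardsC A) addKn.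
by rewrite -cardCA -cards_draws; apply: eq_card => s; rewrite !inE andbC.
Qed.

Lemma sum_draws_setC (h : T -> V) :
  \sum_(s : {set T} | #|s| == k) \sum_(i in ~: s) h i = \sum_i h i *+ 'C(#|T|.-1, k).
Proof.
rewrite (exchange_big_dep xpredT) //; apply: eq_bigr => i _.
rewrite -subn1 -(cards1 i) -card_draws_subsetC -sumr_const.
by apply: eq_bigl => s; rewrite !inE finset.subsetC finset.sub1set inE.
Qed.

Lemma sum_draws_setC2 (h : T -> T -> V) :
  \sum_(s : {set T} | #|s| == k) \sum_(i in ~: s) \sum_(j in ~: s) h i j =
  \sum_i \sum_j h i j *+ 'C(#|T| - #|[set i; j]|, k).
Proof.
rewrite (exchange_big_dep xpredT) //; apply: eq_bigr => i _.
rewrite (exchange_big_dep xpredT) //; apply: eq_bigr => j _.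
rewrite -card_draws_subsetC -sumr_const; apply: eq_bigl => s.
by rewrite !inE finset.subsetC finset.subUset !finset.sub1set !inE andbA.
Qed.
End sums_over_draws.

Section ordinal_pairs.
Variables (V : nmodType) (n : nat).

Lemma sum_ord_pairs (f : 'I_n -> 'I_n -> V) :
  \sum_i \sum_j f i j = \sum_i f i i + \sum_(i < n) \sum_(j < n | (i < j)%N) (f i j + f j i).
Proof.
have split_row i : \sum_j f i j =
    f i i + (\sum_(j < n | (i < j)%N) f i j + \sum_(j < n | (j < i)%N) f i j).
  rewrite (bigD1 i) //=; congr (_ + _); rewrite (bigID (fun j : 'I_n => (i < j)%N)) /=.
  by congr (_ + _); apply: eq_bigl => j; rewrite -(inj_eq val_inj) /=; case: ltngtP.
under eq_bigr do rewrite split_row.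
rewrite !big_split /=; congr (_ + _); under [RHS]eq_bigr do rewrite big_split /=.
rewrite big_split /=; congr (_ + _).
by rewrite (exchange_big_dep xpredT).
Qed.

Lemma sum_ord_pairs_small (f : 'I_n -> 'I_n -> V) :
  (n <= 1)%N -> \sum_(i < n) \sum_(j < n | (i < j)%N) f i j = 0.
Proof.
move=> n_le1; rewrite big1 // => i _; rewrite big1 // => j ij.
by have := ltn_ord j; lia.
Qed.

End ordinal_pairs.

Lemma sqr_sum_ord (R : comNzRingType) n (a : 'I_n -> R) :
  (\sum_i a i) ^+ 2 = \sum_i a i ^+ 2 + 2 * \sum_(i < n) \sum_(j < n | (i < j)%N) a i * a j.
Proof.
rewrite expr2 mulr_suml; under eq_bigr do rewrite mulr_sumr.
rewrite sum_ord_pairs mulr_sumr; congr (_ + _); apply: eq_bigr => i _.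
by rewrite mulr_sumr; apply: eq_bigr => j _; ring.
Qed.

Local Open Scope classical_set_scope.

Section subsampling.
Context {R : realType} {d : measure_display} {Omega : measurableType d}.
Context (P : probability Omega R) {n : nat} (n1 : nat) (S : Omega -> {set 'I_n}).
Variables (X : {set 'I_n} -> 'I_n -> Omega -> R) (e1 : 'I_n -> R) (e2 : 'I_n -> 'I_n -> R).
Hypothesis n1_lt_n : (n1 < n)%N.
Hypothesis mS : forall s, measurable [set w | S w = s].
Hypothesis PS : forall s : {set 'I_n}, P [set w | S w = s] =
  (if #|s| == n1 then ('C(n, n1)%:R)^-1 else 0)%:E.
Hypothesis mX : forall s i, measurable_fun setT (X s i).
Hypothesis iX2 : forall s i, P.-integrable setT (EFin \o (fun w => X s i w ^+ 2)).
Hypothesis condE_X : forall (s : {set 'I_n}) (i : 'I_n), #|s| = n1 -> i \notin s ->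
  condE P (X s i) [set w | S w = s] = e1 i.
Hypothesis condE_XX : forall (s : {set 'I_n}) (i j : 'I_n),
  #|s| = n1 -> i \notin s -> j \notin s ->
  condE P (fun w => X s i w * X s j w) [set w | S w = s] = e2 i j.

Let n2 := (n - n1)%N.
Let C := 'C(n, n1)%:R : R.
Let p (s : {set 'I_n}) := fine (P [set w | S w = s]).
Let muhat w := n2%:R^-1 * \sum_(i in ~: S w) X (S w) i w.

Let C_neq0 : C != 0. Proof. by rewrite pnatr_eq0 -lt0n bin_gt0 ltnW. Qed.
Let n_neq0 : n%:R != 0 :> R. Proof. by rewrite pnatr_eq0 -lt0n (leq_ltn_trans _ n1_lt_n). Qed.
Let n2_neq0 : n2%:R != 0 :> R. Proof. by rewrite pnatr_eq0 subn_eq0 -ltnNge. Qed.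

Let binom_pred_ratio : 'C(n.-1, n1)%:R = n2%:R * C / n%:R :> R.
Proof. by rewrite -[RHS]mulrC -!natrM -mul_bin_down natrM mulKf. Qed.

Let binom_pred2_ratio :
  (n%:R - 1) * 'C(n - 2, n1)%:R = (n2%:R - 1) * 'C(n.-1, n1)%:R :> R.
Proof.
have natr_pred m : (0 < m)%N -> m%:R - 1 = (m.-1)%:R :> R.
  by move=> m_gt0; rewrite -subn1 natrB.
have := mul_bin_down n.-1 n1.
rewrite (_ : n.-1.-1 = n - 2)%N; last by lia.
rewrite (_ : n.-1 - n1 = n2.-1)%N; last by rewrite /n2; lia.
by rewrite !natr_pred ?subn_gt0 ?(leq_ltn_trans _ n1_lt_n) // -!natrM => ->.
Qed.

Let iX (s : {set 'I_n}) (i : 'I_n) : P.-integrable setT (EFin \o X s i).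
Proof. exact: integrable_of_sqr. Qed.

Let iXX (s : {set 'I_n}) (i j : 'I_n) :
  P.-integrable setT (EFin \o (fun w => X s i w * X s j w)).
Proof. exact: integrableM_of_sqr. Qed.

Let integrable_on_draw (s : {set 'I_n}) (f : Omega -> R) :
  P.-integrable setT (EFin \o f) -> P.-integrable [set w | S w = s] (EFin \o f).
Proof. exact: integrableS. Qed.

Lemma Rintegral_on_draw (s : {set 'I_n}) {f : Omega -> R} {c : R} :
  P.-integrable setT (EFin \o f) -> (#|s| = n1 -> condE P f [set w | S w = s] = c) ->
  \int[P]_(w in [set w | S w = s]) f w = c * p s.
Proof.
move=> iF condE_f; rewrite Rintegral_condE // /p PS /=.
by case: eqP => [/condE_f -> // | _]; rewrite !mulr0.
Qed.

Lemma sum_draw_weights (g : {set 'I_n} -> R) :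
  \sum_s g s * p s = C^-1 * \sum_(s : {set 'I_n} | #|s| == n1) g s.
Proof.
rewrite [in RHS]big_mkcond mulr_sumr; apply: eq_bigr => s _.
by rewrite /p PS /=; case: ifP => _; rewrite ?mulr0 ?mul0r // mulrC.
Qed.

Lemma Rintegral_on_draw_mean (s : {set 'I_n}) :
  \int[P]_(w in [set w | S w = s]) (n2%:R^-1 * \sum_(i in ~: s) X s i w) =
  (n2%:R^-1 * \sum_(i in ~: s) e1 i) * p s.
Proof.
rewrite RintegralZl //; last exact/integrable_on_draw/integrable_sumR.
rewrite Rintegral_sum //; last by move=> i; exact: integrable_on_draw.
rewrite -mulrA mulr_suml; congr (_ * _); apply: eq_bigr => i; rewrite inE => i_notin_s.
exact: (Rintegral_on_draw s (iX s i) (fun s_card => condE_X s i s_card i_notin_s)).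
Qed.

Lemma mean_muhat : \int[P]_w muhat w = n%:R^-1 * \sum_i e1 i.
Proof.
rewrite (Rintegral_partition S (fun s w => n2%:R^-1 * \sum_(i in ~: s) X s i w) mS); last first.
  by move=> s; apply: integrableZlR; exact: integrable_sumR.
under eq_bigr do rewrite Rintegral_on_draw_mean.
rewrite sum_draw_weights -mulr_sumr sum_draws_setC card_ord sumrMnl -[_ *+ 'C(_, _)]mulr_natr.
by rewrite binom_pred_ratio; field; rewrite n_neq0 n2_neq0 C_neq0.
Qed.

(* e2 is symmetric as soon as some n1-subset avoids both i and j. *)
Lemma e2_sym_binom (i j : 'I_n) : i != j ->
  'C(n - 2, n1)%:R * e2 j i = 'C(n - 2, n1)%:R * e2 i j :> R.
Proof.
move=> i_neq_j; have [->|] := posnP 'C(n - 2, n1); first by rewrite !mul0r.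
have card_ij : #|[set i; j]%SET| = 2 by rewrite cards2 i_neq_j.
rewrite -[X in 'C(n - X, n1)]card_ij -[X in 'C(X - _, n1)](card_ord n) -card_draws_subsetC.
case/card_gt0P => s; rewrite !inE finset.subsetC finset.subUset !finset.sub1set !inE.
case/and3P => /eqP s_card i_notin_s j_notin_s.
rewrite -(condE_XX _ _ _ s_card i_notin_s j_notin_s).
rewrite -(condE_XX _ _ _ s_card j_notin_s i_notin_s).
by congr (_ * condE _ _ _); apply/funext => w; rewrite mulrC.
Qed.

Lemma Rintegral_on_draw_sqr (s : {set 'I_n}) :
  \int[P]_(w in [set w | S w = s])
     (n2%:R^-1 ^+ 2 * \sum_(i in ~: s) \sum_(j in ~: s) X s i w * X s j w) =
  (n2%:R^-1 ^+ 2 * \sum_(i in ~: s) \sum_(j in ~: s) e2 i j) * p s.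
Proof.
rewrite RintegralZl //; last first.
  by apply/integrable_on_draw/integrable_sumR => i; exact: integrable_sumR.
rewrite Rintegral_sum //; last by move=> i; apply/integrable_on_draw/integrable_sumR.
rewrite -mulrA mulr_suml; congr (_ * _); apply: eq_bigr => i; rewrite inE => i_notin_s.
rewrite Rintegral_sum //; last by move=> j; exact: integrable_on_draw.
rewrite mulr_suml; apply: eq_bigr => j; rewrite inE => j_notin_s.
exact: (Rintegral_on_draw s (iXX s i j)
  (fun s_card => condE_XX s i j s_card i_notin_s j_notin_s)).
Qed.

Lemma sqr_muhat w : muhat w ^+ 2 =
  n2%:R^-1 ^+ 2 * \sum_(i in ~: S w) \sum_(j in ~: S w) X (S w) i w * X (S w) j w.
Proof.
rewrite /muhat exprMn; congr (_ * _); rewrite expr2 mulr_suml; apply: eq_bigr => i _.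
exact: mulr_sumr.
Qed.

Lemma second_moment_muhat : \int[P]_w muhat w ^+ 2 =
  (n%:R * n2%:R)^-1 * (\sum_i e2 i i
    + 2 * (n2%:R - 1) / (n%:R - 1) * \sum_(i < n) \sum_(j < n | (i < j)%N) e2 i j).
Proof.
under eq_Rintegral do rewrite sqr_muhat.
rewrite (Rintegral_partition S (fun s w =>
  n2%:R^-1 ^+ 2 * \sum_(i in ~: s) \sum_(j in ~: s) X s i w * X s j w) mS); last first.
  by move=> s; apply/integrableZlR/integrable_sumR => i; exact: integrable_sumR.
under eq_bigr do rewrite Rintegral_on_draw_sqr.
rewrite sum_draw_weights -mulr_sumr sum_draws_setC2 sum_ord_pairs card_ord.
have card_ii (i : 'I_n) : #|[set i; i]%SET| = 1%N by rewrite cards2 eqxx.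
under eq_bigr do rewrite card_ii subn1.
have pairs : \sum_(i < n) \sum_(j < n | (i < j)%N)
    (e2 i j *+ 'C(n - #|[set i; j]%SET|, n1) + e2 j i *+ 'C(n - #|[set j; i]%SET|, n1))
  = 2 * 'C(n - 2, n1)%:R * \sum_(i < n) \sum_(j < n | (i < j)%N) e2 i j.
  rewrite mulr_sumr; apply: eq_bigr => i _; rewrite mulr_sumr; apply: eq_bigr => j ij.
  have i_neq_j : i != j by rewrite -val_eqE /= ltn_eqF.
  rewrite !cards2 i_neq_j eq_sym i_neq_j -![e2 _ _ *+ _]mulr_natl.
  by rewrite (e2_sym_binom _ _ i_neq_j); ring.
rewrite pairs sumrMnl -[_ *+ 'C(_, _)]mulr_natr binom_pred_ratio.
have [n_le1|n_gt1] := leqP n 1.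
  by rewrite sum_ord_pairs_small // !mulr0 !addr0; field; rewrite n_neq0 n2_neq0 C_neq0.
have n_sub1_neq0 : n%:R - 1 != 0 :> R by rewrite subr_eq0 pnatr_eq1 gtn_eqF.
have -> : 'C(n - 2, n1)%:R = (n2%:R - 1) * 'C(n.-1, n1)%:R / (n%:R - 1) :> R.
  by rewrite -binom_pred2_ratio mulrC mulKf.
by rewrite binom_pred_ratio; field; rewrite n_neq0 n2_neq0 C_neq0 n_sub1_neq0.
Qed.

Lemma integrable_muhat : P.-integrable setT (EFin \o muhat).
Proof.
apply: (integrable_partition S (fun s w => n2%:R^-1 * \sum_(i in ~: s) X s i w) mS) => s.
by apply/integrableZlR/integrable_sumR.
Qed.

Lemma integrable_sqr_muhat : P.-integrable setT (EFin \o (fun w => muhat w ^+ 2)).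
Proof.
have iF (s : {set 'I_n}) : P.-integrable setT (EFin \o (fun w =>
    n2%:R^-1 ^+ 2 * \sum_(i in ~: s) \sum_(j in ~: s) X s i w * X s j w)).
  by apply/integrableZlR/integrable_sumR => i; exact: integrable_sumR.
have := integrable_partition S _ mS iF.
by apply: eq_integrable => // w _; rewrite /= sqr_muhat.
Qed.

Lemma variance_muhat :
  \int[P]_w (muhat w - n%:R^-1 * \sum_i e1 i) ^+ 2 =
  (n%:R ^+ 2 * n2%:R)^-1 *
    (\sum_(i < n) (n%:R * e2 i i - n2%:R * e1 i ^+ 2)
     + 2 / (n%:R - 1) *
       \sum_(i < n) \sum_(i' < n | (i < i')%N)
          (n%:R * (n2%:R - 1) * e2 i i' - (n%:R - 1) * n2%:R * e1 i * e1 i')).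
Proof.
rewrite Rintegral_centered_sqr; [|exact: integrable_muhat|exact: integrable_sqr_muhat].
rewrite second_moment_muhat mean_muhat sumrB -!mulr_sumr.
have -> : \sum_(i < n) \sum_(i' < n | (i < i')%N)
    (n%:R * (n2%:R - 1) * e2 i i' - (n%:R - 1) * n2%:R * e1 i * e1 i') =
  n%:R * (n2%:R - 1) * \sum_(i < n) \sum_(i' < n | (i < i')%N) e2 i i'
  - (n%:R - 1) * n2%:R * \sum_(i < n) \sum_(i' < n | (i < i')%N) e1 i * e1 i'.
  rewrite !mulr_sumr -sumrB; apply: eq_bigr => i _.
  by rewrite !mulr_sumr -sumrB; apply: eq_bigr => j _; ring.
have sqr_mean a b : a - 2 * b * b + b ^+ 2 = a - b ^+ 2 :> R by ring.
rewrite sqr_mean exprMn sqr_sum_ord.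
(* For n = 1 the pair sums are empty, which absorbs the junk value 2 / 0 = 0. *)
have [n_le1|n_gt1] := leqP n 1.
  rewrite !sum_ord_pairs_small // !mulr0 subr0 mulr0 !addr0.
  by field; rewrite n_neq0 n2_neq0.
have n_sub1_neq0 : n%:R - 1 != 0 :> R by rewrite subr_eq0 pnatr_eq1 gtn_eqF.
by field; rewrite n_neq0 n2_neq0 n_sub1_neq0.
Qed.

End subsampling.

Theorem theorem3 (R : realType) (d : measure_display) (Omega : measurableType d)
  (P : probability Omega R) (n n1 : nat) (hn : (n1 < n)%N)
  (L : R -> R -> R) (y : 'I_n -> Omega -> R)
  (yhat : {set 'I_n} -> 'I_n -> Omega -> R)
  (S : Omega -> {set 'I_n}) (e1 : 'I_n -> R) (e2 : 'I_n -> 'I_n -> R) :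
  (forall s : {set 'I_n}, measurable [set w | S w = s]) ->
  (forall s : {set 'I_n}, P [set w | S w = s] =
     (if #|s| == n1 then ('C(n, n1)%:R)^-1 else 0)%:E) ->
  (forall (s : {set 'I_n}) (i : 'I_n), measurable_fun setT (fun w => L (yhat s i w) (y i w))) ->
  (forall (s : {set 'I_n}) (i : 'I_n), P.-integrable setT (fun w => (L (yhat s i w) (y i w) ^+ 2)%:E)) ->
  (forall (s : {set 'I_n}) (i : 'I_n), #|s| = n1 -> i \notin s ->
     condE P (fun w => L (yhat s i w) (y i w)) [set w | S w = s] = e1 i) ->
  (forall (s : {set 'I_n}) (i i' : 'I_n), #|s| = n1 -> i \notin s -> i' \notin s ->
     condE P (fun w => L (yhat s i w) (y i w) * L (yhat s i' w) (y i' w))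
       [set w | S w = s] = e2 i i') ->
  let n2 := (n - n1)%N in
  let muhat := fun w => (n2%:R)^-1 * \sum_(i in ~: S w) L (yhat (S w) i w) (y i w) in
  let m := (n%:R)^-1 * \sum_(i < n) e1 i in
  (\int[P]_w (muhat w)%:E = m%:E)%E /\
  (\int[P]_w ((muhat w - m) ^+ 2)%:E =
    ((n%:R ^+ 2 * n2%:R)^-1 *
      (\sum_(i < n) (n%:R * e2 i i - n2%:R * e1 i ^+ 2)
       + 2 / (n%:R - 1) *
         \sum_(i < n) \sum_(i' < n | (i < i')%N)
            (n%:R * (n2%:R - 1) * e2 i i' - (n%:R - 1) * n2%:R * e1 i * e1 i')))%:E)%E.
Proof.
move=> mS PS mX iX2 condE_X condE_XX n2 muhat m.
pose X s i w := L (yhat s i w) (y i w).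
have imuhat : P.-integrable setT (EFin \o muhat).
  exact: (integrable_muhat P n1 S X mS mX iX2).
split.
  rewrite integral_EFin_Rintegral //; congr (_%:E).
  exact: (mean_muhat P n1 S X e1 hn mS PS mX iX2 condE_X).
rewrite integral_EFin_Rintegral //; last first.
  exact/integrable_centered_sqr/(integrable_sqr_muhat P n1 S X mS mX iX2).
by congr (_%:E); exact: (variance_muhat P n1 S X e1 e2 hn mS PS mX iX2 condE_X condE_XX).
Qed.
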